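(* Assume $J$ satisfies (J1), (J2), (J5) and (JP), and $h\equiv0$. Let $u$ be a minimizer for $H$ in $Q_\ell(q)$ for some $q\in\mathbb Z^d$ and $\ell\in\mathbb N$. If $q\in\partial u$, then $$\min\Big\{\#\big(\{u=-1\}\cap Q_\ell(q)\big),\ \#\big(\{u=1\}\cap Q_\ell(q)\big)\Big\}\ge\bar c\,\ell^d,$$ for a constant $\bar c>0$ depending only on $d$, $s$, $\lambda$ and $\Lambda$.
   Context: Fix $d\ge2$, $|x|:=\sum_n|x_n|$ ($\ell^1$ norm), $|x|_\infty:=\max_n|x_n|$. Configurations are maps $u:\mathbb Z^d\to\{-1,1\}$; $\partial u:=\{i: u_i=1\text{ and }\exists j,\ |i-j|=1,\ u_j=-1\}$; $\{u=\pm1\}:=\{i\in\mathbb Z^d:u_i=\pm1\}$. With $h\equiv0$, for finite $\Gamma$: $H_\Gamma(u):=\sum_{(i,j)\in\mathbb Z^{2d}\setminus(\mathbb Z^d\setminus\Gamma)^2}J_{ij}(1-u_iu_j)$; $u$ is a minimizer for $H$ in $\Gamma$ if $H_\Gamma(u)\le H_\Gamma(v)$ for all $v$ agreeing with $u$ outside $\Gamma$. $Q_\ell(q):=\{i\in\mathbb Z^d:|i-q|_\infty\le\ell\}$. Conditions on $J:\mathbb Z^d\times\mathbb Z^d\to[0,\infty)$: (J1) $J_{ij}=J_{ji}$; (J2) $J_{ii}=0$; (J5) $J_{ij}=J_{i'j'}$ whenever $i-i'=j-j'\in\tau\mathbb Z^d$, for some $\tau\in\mathbb N$; (JP) $\lambda|i-j|^{-d-s}\le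 J_{ij}\le\Lambda|i-j|^{-d-s}$ for all $i\ne j$, for some $s\in(0,1)$, $\Lambda\ge\lambda>0$. *)

From Stdlib Require Import Reals Lra Lia ZArith Arith List.
Import ListNotations.
Open Scope R_scope.

(** Points of Z^d: integer sequences vanishing from index d on. *)
Record pt (d : nat) := Pt { coord : nat -> Z ; coord_supp : forall n, (d <= n)%nat -> coord n = 0%Z }.
Arguments coord {d} _ _.

Definition dist1 {d} (i j : pt d) : Z :=
  fold_right Z.add 0%Z (map (fun n => Z.abs (coord i n - coord j n)) (seq 0 d)).

Definition distinf {d} (i j : pt d) : Z :=
  fold_right Z.max 0%Z (map (fun n => Z.abs (coord i n - coord j n)) (seq 0 d)).

Definition cube {d} (l : nat) (q : pt d) (i : pt d) : Prop := (distinf i q <= Z.of_nat l)%Z.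

Definition config {d} (u : pt d -> Z) : Prop := forall i, u i = 1%Z \/ u i = (-1)%Z.

Definition in_boundary {d} (u : pt d -> Z) (i : pt d) : Prop :=
  u i = 1%Z /\ exists j, dist1 i j = 1%Z /\ u j = (-1)%Z.

(** The (nonnegative) summand of H_Gamma, indexed by pairs (i,j) not both outside Gamma. *)
Definition Hterm {d} (J : pt d -> pt d -> R) (u : pt d -> Z) (p : pt d * pt d) : R :=
  J (fst p) (snd p) * (1 - IZR (u (fst p) * u (snd p))).

Definition Hindex {d} (Gam : pt d -> Prop) (p : pt d * pt d) : Prop :=
  Gam (fst p) \/ Gam (snd p).

(** S is the value of H_Gamma(u): the supremum of all finite partial sums
    over distinct index pairs (the series has nonnegative terms). *)
Definition H_value {d} (J : pt d -> pt d -> R) (Gam : pt d -> Prop) (u : pt d -> Z) (S : R) : Prop :=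
  is_lub (fun x => exists l : list (pt d * pt d),
             NoDup l /\ Forall (Hindex Gam) l /\
             x = fold_right Rplus 0 (map (Hterm J u) l)) S.

(** u is a minimizer for H in Gamma: H_Gamma(u) is finite and
    H_Gamma(u) <= H_Gamma(v) for every configuration v agreeing with u outside Gamma
    (v with H_Gamma(v) = +oo, i.e. without a finite value, satisfy this trivially). *)
Definition minimizer {d} (J : pt d -> pt d -> R) (Gam : pt d -> Prop) (u : pt d -> Z) : Prop :=
  exists Su, H_value J Gam u Su /\
    forall v : pt d -> Z, config v -> (forall i, ~ Gam i -> v i = u i) ->
      forall Sv, H_value J Gam v Sv -> Su <= Sv.

Definition card_is {d} (P : pt d -> Prop) (n : nat) : Prop :=
  exists l : list (pt d), NoDup l /\ (forall x, In x l <-> P x) /\ length l = n.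

Definition J_nonneg {d} (J : pt d -> pt d -> R) := forall i j, 0 <= J i j.
Definition J1 {d} (J : pt d -> pt d -> R) := forall i j, J i j = J j i.
Definition J2 {d} (J : pt d -> pt d -> R) := forall i, J i i = 0.
Definition J5 {d} (J : pt d -> pt d -> R) :=
  exists tau : nat, (1 <= tau)%nat /\
    forall i i' j j' : pt d,
      (forall n, (coord i n - coord i' n = coord j n - coord j' n)%Z /\
                 (Z.of_nat tau | coord i n - coord i' n)%Z) ->
      J i j = J i' j'.
Definition JP {d} (J : pt d -> pt d -> R) (s lam Lam : R) :=
  forall i j : pt d, i <> j ->
    lam * Rpower (IZR (dist1 i j)) (- (INR d + s)) <= J i j /\
    J i j <= Lam * Rpower (IZR (dist1 i j)) (- (INR d + s)).

(* Let A_r be the minus points of u in Q_r(q) and V_r = #A_r.  Flipping A_r to +1 is an admissible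
   competitor, so minimality bounds the interaction of A_r with the plus points by the interaction of
   A_r with the minus points outside Q_r(q); by the decay of J the latter is at most
   sum_(i in A_r) C (r + 1 - |i - q|_oo)^(-s).  Every i in A_r interacts with at least
   (2R+1)^d - V_r points of Q_(r+R)(q) \ A_r at strength >~ R^(-d-s), which gives a lower bound
   V_r ((2R+1)^d - V_r) R^(-d-s).  Summing over r in [M, 2M) and choosing R^d ~ V_(2M) yields the
   doubling step V_M >= delta M^d => V_(2M) >= delta (2M)^d.  As q is in the boundary of u, V_1 >= 1,
   and iterating over dyadic scales gives V_l >~ l^d; the plus points are handled by the symmetry
   u -> -u, for which q itself is a minus point. *)

From Stdlib Require Import Reals Lra Lia ZArith Arith List FunctionalExtensionality ProofIrrelevance.
Import ListNotations.
Open Scope R_scope.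

Definition sumR {A} (f : A -> R) (l : list A) : R := fold_right Rplus 0 (map f l).

Lemma sumR_nil {A} (f : A -> R) : sumR f [] = 0.
Proof. reflexivity. Qed.

Lemma sumR_cons {A} (f : A -> R) a l : sumR f (a :: l) = f a + sumR f l.
Proof. reflexivity. Qed.

Lemma sumR_app {A} (f : A -> R) l1 l2 : sumR f (l1 ++ l2) = sumR f l1 + sumR f l2.
Proof.
  induction l1 as [|a l1 IH]; [unfold sumR; simpl; lra|].
  rewrite <- app_comm_cons, !sumR_cons, IH; lra.
Qed.

Lemma sumR_map {A B} (f : B -> R) (g : A -> B) l : sumR f (map g l) = sumR (fun x => f (g x)) l.
Proof. induction l as [|a l IH]; auto. simpl map; rewrite !sumR_cons, IH; auto. Qed.

Lemma sumR_plus {A} (f g : A -> R) l : sumR (fun x => f x + g x) l = sumR f l + sumR g l.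
Proof. induction l as [|a l IH]; [unfold sumR; simpl; lra|]. rewrite !sumR_cons, IH; lra. Qed.

Lemma sumR_scal_l {A} (f : A -> R) l c : sumR (fun x => c * f x) l = c * sumR f l.
Proof. induction l as [|a l IH]; [unfold sumR; simpl; lra|]. rewrite !sumR_cons, IH; lra. Qed.

Lemma sumR_zero {A} (l : list A) : sumR (fun _ => 0) l = 0.
Proof. induction l as [|a l IH]; auto. rewrite sumR_cons, IH; lra. Qed.

Lemma sumR_filter_split {A} (f : A -> R) (p : A -> bool) l :
  sumR f l = sumR f (filter p l) + sumR f (filter (fun x => negb (p x)) l).
Proof.
  induction l as [|a l IH]; [unfold sumR; simpl; lra|].
  simpl; destruct (p a); simpl; rewrite !sumR_cons, IH; lra.
Qed.

Lemma sumR_filter {A} (p : A -> bool) (f : A -> R) l :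
  sumR (fun x => if p x then f x else 0) l = sumR f (filter p l).
Proof. induction l as [|a l IH]; simpl; auto. rewrite sumR_cons, IH. destruct (p a); rewrite ?sumR_cons; lra. Qed.

Lemma sumR_le {A} (f g : A -> R) l : (forall x, In x l -> f x <= g x) -> sumR f l <= sumR g l.
Proof.
  induction l as [|a l IH]; intros H; [unfold sumR; simpl; lra|].
  rewrite !sumR_cons. apply Rplus_le_compat; [apply H | apply IH; intros; apply H]; simpl; auto.
Qed.

Lemma sumR_ext {A} (f g : A -> R) l : (forall x, In x l -> f x = g x) -> sumR f l = sumR g l.
Proof. intros H. apply Rle_antisym; apply sumR_le; intros x Hx; rewrite (H x Hx); lra. Qed.

Lemma sumR_nonneg {A} (f : A -> R) l : (forall x, In x l -> 0 <= f x) -> 0 <= sumR f l.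
Proof. intros H. rewrite <- (sumR_zero l). apply sumR_le; auto. Qed.

Lemma sumR_le_const {A} (f : A -> R) l c : (forall x, In x l -> f x <= c) -> sumR f l <= INR (length l) * c.
Proof.
  induction l as [|a l IH]; intros H; [unfold sumR; simpl; lra|].
  rewrite sumR_cons; simpl length; rewrite S_INR.
  assert (f a <= c) by (apply H; simpl; auto).
  assert (sumR f l <= INR (length l) * c) by (apply IH; intros; apply H; simpl; auto). lra.
Qed.

Lemma sumR_ge_const {A} (f : A -> R) l c : (forall x, In x l -> c <= f x) -> INR (length l) * c <= sumR f l.
Proof.
  induction l as [|a l IH]; intros H; [unfold sumR; simpl; lra|].
  rewrite sumR_cons; simpl length; rewrite S_INR.
  assert (c <= f a) by (apply H; simpl; auto).
  assert (INR (length l) * c <= sumR f l) by (apply IH; intros; apply H; simpl; auto). lra.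
Qed.

Lemma sumR_incl {A} (f : A -> R) (l1 l2 : list A) :
  NoDup l1 -> incl l1 l2 -> (forall x, In x l2 -> 0 <= f x) -> sumR f l1 <= sumR f l2.
Proof.
  revert l2. induction l1 as [|a l1 IH]; intros l2 Hnd Hinc Hpos.
  - apply sumR_nonneg; auto.
  - inversion Hnd; subst.
    destruct (in_split a l2) as [x [y ->]]; [apply Hinc; simpl; auto|].
    rewrite sumR_cons, !sumR_app, sumR_cons.
    assert (hsub : sumR f l1 <= sumR f (x ++ y)); [|rewrite sumR_app in hsub; lra].
    apply IH; auto.
    + intros b Hb. assert (Hb' : In b (x ++ a :: y)) by (apply Hinc; simpl; auto).
      apply in_app_or in Hb'. apply in_or_app. destruct Hb' as [h|[h|h]]; subst; tauto.
    + intros z Hz. apply Hpos. apply in_app_or in Hz. apply in_or_app. simpl; tauto.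
Qed.

Lemma sumR_swap {A B} (F : A -> B -> R) l1 l2 :
  sumR (fun i => sumR (F i) l2) l1 = sumR (fun j => sumR (fun i => F i j) l1) l2.
Proof.
  induction l1 as [|a l1 IH]; [symmetry; apply sumR_zero|].
  rewrite sumR_cons, IH, <- sumR_plus. apply sumR_ext; intros. rewrite sumR_cons; lra.
Qed.

Lemma sumR_list_prod {A B} (F : A * B -> R) l1 l2 :
  sumR F (list_prod l1 l2) = sumR (fun i => sumR (fun j => F (i, j)) l2) l1.
Proof.
  induction l1 as [|a l1 IH]; simpl; auto.
  rewrite sumR_app, IH, sumR_cons, sumR_map. reflexivity.
Qed.

Open Scope Z_scope.

Lemma pt_ext {d} (i j : pt d) : (forall n, (n < d)%nat -> coord i n = coord j n) -> i = j.
Proof.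
  destruct i as [ci hi], j as [cj hj]; simpl; intros H.
  assert (ci = cj) as <-.
  { apply functional_extensionality; intros n.
    destruct (Nat.lt_ge_cases n d); [apply H | rewrite hi, hj]; auto. }
  f_equal. apply proof_irrelevance.
Qed.

Lemma forall_lt_dec (P : nat -> Prop) (Pd : forall n, {P n} + {~ P n}) k :
  {forall n, (n < k)%nat -> P n} + {~ forall n, (n < k)%nat -> P n}.
Proof.
  induction k as [|k [IH|IH]].
  - left; intros; lia.
  - destruct (Pd k) as [h|h].
    + left; intros n hn. destruct (Nat.eq_dec n k); [subst; auto | apply IH; lia].
    + right; intros H; apply h, H; lia.
  - right; intros H; apply IH; intros; apply H; lia.
Defined.

Definition pt_eq_dec {d} (i j : pt d) : {i = j} + {i <> j}.
Proof.
  destruct (forall_lt_dec (fun n => coord i n = coord j n) (fun n => Z.eq_dec _ _) d) as [h|h].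
  - left; apply pt_ext; auto.
  - right; intros ->; auto.
Defined.

Definition peqb {d} (i j : pt d) : bool := if pt_eq_dec i j then true else false.

Lemma peqb_true {d} (i j : pt d) : peqb i j = true <-> i = j.
Proof. unfold peqb; destruct (pt_eq_dec i j); split; congruence. Qed.

Program Definition pt_of (d : nat) (f : nat -> Z) : pt d :=
  Pt d (fun n => if Nat.ltb n d then f n else 0) _.
Next Obligation. destruct (Nat.ltb_spec n d); auto; lia. Qed.

Lemma coord_pt_of d f n : (n < d)%nat -> coord (pt_of d f) n = f n.
Proof. intros h; simpl. destruct (Nat.ltb_spec n d); auto; lia. Qed.

Lemma fold_max_ge {A} (f : A -> Z) L x : In x L -> f x <= fold_right Z.max 0 (map f L).
Proof.
  induction L as [|a L IH]; simpl; [tauto|].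
  intros [<-|h]; [|specialize (IH h)]; lia.
Qed.

Lemma fold_max_le {A} (f : A -> Z) L b : 0 <= b -> (forall x, In x L -> f x <= b) ->
  fold_right Z.max 0 (map f L) <= b.
Proof.
  intros hb; induction L as [|a L IH]; simpl; intros H; auto.
  assert (f a <= b) by auto. assert (fold_right Z.max 0 (map f L) <= b) by auto. lia.
Qed.

Lemma fold_sum_ge {A} (f : A -> Z) L x : (forall y, In y L -> 0 <= f y) -> In x L ->
  f x <= fold_right Z.add 0 (map f L).
Proof.
  induction L as [|a L IH]; simpl; intros hp; [tauto|].
  assert (h0 : 0 <= fold_right Z.add 0 (map f L)).
  { clear IH; induction L as [|b L IHL]; simpl; [lia|].
    assert (0 <= f b) by (apply hp; simpl; auto).
    assert (0 <= fold_right Z.add 0 (map f L)) by (apply IHL; intros; apply hp; simpl in *; tauto). lia. }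
  assert (0 <= f a) by auto.
  intros [<-|h]; [|specialize (IH (fun y hy => hp y (or_intror hy)) h)]; lia.
Qed.

Lemma fold_sum_le {A} (f : A -> Z) L b : (forall y, In y L -> f y <= b) ->
  fold_right Z.add 0 (map f L) <= Z.of_nat (length L) * b.
Proof.
  induction L as [|a L IH]; simpl; intros h; [lia|].
  assert (f a <= b) by auto.
  assert (fold_right Z.add 0 (map f L) <= Z.of_nat (length L) * b) by auto.
  change (f a + fold_right Z.add 0 (map f L) <= Z.of_nat (S (length L)) * b).
  rewrite Nat2Z.inj_succ, Z.mul_succ_l. lia.
Qed.

Lemma distinf_sym {d} (i j : pt d) : distinf i j = distinf j i.
Proof. unfold distinf. f_equal. apply map_ext. intros; rewrite <- Z.abs_opp; f_equal; lia. Qed.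

Lemma distinf_nonneg {d} (i j : pt d) : 0 <= distinf i j.
Proof. unfold distinf; induction (seq 0 d); simpl; lia. Qed.

Lemma coord_le_distinf {d} (i j : pt d) n : Z.abs (coord i n - coord j n) <= distinf i j.
Proof.
  destruct (Nat.lt_ge_cases n d) as [h|h].
  - apply (fold_max_ge (fun n => Z.abs (coord i n - coord j n))). apply in_seq; lia.
  - rewrite !coord_supp by auto. apply distinf_nonneg.
Qed.

Lemma distinf_le_iff {d} (i j : pt d) b : 0 <= b ->
  (distinf i j <= b <-> forall n, (n < d)%nat -> Z.abs (coord i n - coord j n) <= b).
Proof.
  intros hb; split.
  - intros h n _. pose proof (coord_le_distinf i j n); lia.
  - intros h. apply fold_max_le; auto. intros x hx. apply in_seq in hx. apply h; lia.
Qed.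

Lemma distinf_triangle {d} (i j k : pt d) : distinf i k <= distinf i j + distinf j k.
Proof.
  apply distinf_le_iff; [pose proof (distinf_nonneg i j); pose proof (distinf_nonneg j k); lia|].
  intros n _. pose proof (coord_le_distinf i j n); pose proof (coord_le_distinf j k n). lia.
Qed.

Lemma distinf_diag {d} (i : pt d) : distinf i i = 0.
Proof.
  apply Z.le_antisymm; [|apply distinf_nonneg].
  apply distinf_le_iff; [lia|]. intros; rewrite Z.sub_diag; reflexivity.
Qed.

Lemma distinf_ge1 {d} (i j : pt d) : i <> j -> 1 <= distinf i j.
Proof.
  intros h. destruct (Z.le_gt_cases 1 (distinf i j)) as [|h2]; auto.
  exfalso; apply h, pt_ext. intros n _. pose proof (coord_le_distinf i j n). lia.
Qed.

Lemma distinf_le_dist1 {d} (i j : pt d) : distinf i j <= dist1 i j.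
Proof.
  assert (h0 : forall n, 0 <= Z.abs (coord i n - coord j n)) by (intros; apply Z.abs_nonneg).
  apply fold_max_le.
  - unfold dist1; induction (seq 0 d); simpl; [lia|]. specialize (h0 a); lia.
  - intros x hx. apply (fold_sum_ge (fun n => Z.abs (coord i n - coord j n))); auto.
Qed.

Lemma dist1_le_distinf {d} (i j : pt d) : dist1 i j <= Z.of_nat d * distinf i j.
Proof.
  unfold dist1. rewrite <- (length_seq d 0) at 2. apply fold_sum_le.
  intros; apply coord_le_distinf.
Qed.

Definition int_range (R : nat) : list Z := map (fun t => Z.of_nat t - Z.of_nat R) (seq 0 (2 * R + 1)).

Lemma in_int_range R z : In z (int_range R) <-> - Z.of_nat R <= z <= Z.of_nat R.
Proof.
  unfold int_range. rewrite in_map_iff. split.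
  - intros [t [<- ht]]. apply in_seq in ht. lia.
  - intros h. exists (Z.to_nat (z + Z.of_nat R)). split; [lia | apply in_seq; lia].
Qed.

Lemma int_range_NoDup R : NoDup (int_range R).
Proof. apply NoDup_map_NoDup_ForallPairs; [intros x y _ _ h; lia | apply seq_NoDup]. Qed.

Lemma int_range_length R : length (int_range R) = (2 * R + 1)%nat.
Proof. unfold int_range. rewrite length_map, length_seq. reflexivity. Qed.

Lemma NoDup_flat_map {A B} (g : A -> list B) l :
  NoDup l -> (forall x, In x l -> NoDup (g x)) ->
  (forall x y b, In x l -> In y l -> In b (g x) -> In b (g y) -> x = y) ->
  NoDup (flat_map g l).
Proof.
  induction l as [|a l IH]; intros hl hg hd; simpl; [constructor|].
  inversion hl; subst. apply NoDup_app.
  - apply hg; simpl; auto.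
  - apply IH; auto; intros; [apply hg | eapply hd]; simpl; eauto.
  - intros b hb hb2. apply in_flat_map in hb2. destruct hb2 as [y [hy hy2]].
    assert (a = y) as -> by (eapply hd; simpl; eauto). contradiction.
Qed.

Lemma NoDup_list_prod {A B} (l1 : list A) (l2 : list B) :
  NoDup l1 -> NoDup l2 -> NoDup (list_prod l1 l2).
Proof.
  intros h1 h2. rewrite list_prod_as_flat_map. apply NoDup_flat_map; auto.
  - intros x _. apply NoDup_map_NoDup_ForallPairs; auto. intros a b _ _ e; congruence.
  - intros x y b _ _ hx hy. apply in_map_iff in hx, hy.
    destruct hx as [? [<- _]], hy as [? [e _]]. congruence.
Qed.

Lemma length_flat_map_const {A B} (g : A -> list B) l m :
  (forall x, In x l -> length (g x) = m) -> length (flat_map g l) = (length l * m)%nat.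
Proof. induction l; simpl; intros h; auto. rewrite length_app, h, IHl; auto. Qed.

Definition upd (f : nat -> Z) (k : nat) (z : Z) : nat -> Z :=
  fun n => if Nat.eqb n k then z else f n.

Section CubeEnum.
Context {d : nat} (c : pt d) (R : nat).

Fixpoint box (k : nat) : list (nat -> Z) :=
  match k with
  | O => [fun _ => 0]
  | S k => flat_map (fun f => map (fun a => upd f k (coord c k + a)) (int_range R)) (box k)
  end.

Lemma box_length k : length (box k) = ((2 * R + 1) ^ k)%nat.
Proof.
  induction k; simpl; auto. rewrite (length_flat_map_const _ _ (2 * R + 1)).
  - rewrite IHk, Nat.mul_comm; reflexivity.
  - intros. rewrite length_map. apply int_range_length.
Qed.

Lemma in_box k f : In f (box k) <->
  (forall n, (k <= n)%nat -> f n = 0) /\ (forall n, (n < k)%nat -> Z.abs (f n - coord c n) <= Z.of_nat R).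
Proof.
  revert f; induction k as [|k IH]; simpl; intros f; split.
  - intros [<-|[]]. split; intros; auto; lia.
  - intros [h1 _]. left. apply functional_extensionality; intros n; symmetry; apply h1; lia.
  - intros hf. apply in_flat_map in hf. destruct hf as [g [hg hf]]. apply in_map_iff in hf.
    destruct hf as [a [<- ha]]. apply in_int_range in ha. apply IH in hg. destruct hg as [h1 h2].
    unfold upd. split; intros n hn; destruct (Nat.eqb_spec n k); subst; try lia.
    + apply h1; lia.
    + apply h2; lia.
  - intros [h1 h2]. apply in_flat_map. exists (upd f k 0). split.
    + apply IH. split; intros n hn; unfold upd; destruct (Nat.eqb_spec n k); try lia.
      * apply h1; lia.
      * apply h2; lia.
    + apply in_map_iff. exists (f k - coord c k). split.
      * apply functional_extensionality; intros n. unfold upd. destruct (Nat.eqb_spec n k); subst; lia.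
      * apply in_int_range. specialize (h2 k); lia.
Qed.

Lemma box_NoDup k : NoDup (box k).
Proof.
  induction k as [|k IH]; simpl; [repeat constructor; auto|].
  apply NoDup_flat_map; auto.
  - intros g _. apply NoDup_map_NoDup_ForallPairs; [|apply int_range_NoDup].
    intros a b _ _ h. apply (f_equal (fun f => f k)) in h. unfold upd in h; rewrite Nat.eqb_refl in h; lia.
  - intros g1 g2 b hg1 hg2 hb1 hb2. apply in_map_iff in hb1, hb2.
    destruct hb1 as [a1 [<- _]], hb2 as [a2 [e _]].
    apply in_box in hg1, hg2. apply functional_extensionality; intros n.
    destruct (Nat.eqb_spec n k) as [->|hn].
    + rewrite (proj1 hg1), (proj1 hg2); auto.
    + apply (f_equal (fun f => f n)) in e. unfold upd in e. destruct (Nat.eqb_spec n k); congruence.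
Qed.

End CubeEnum.

Definition cube_list {d} (c : pt d) (R : nat) : list (pt d) := map (pt_of d) (box c R d).

Lemma cube_list_length {d} (c : pt d) R : length (cube_list c R) = ((2 * R + 1) ^ d)%nat.
Proof. unfold cube_list. rewrite length_map. apply box_length. Qed.

Lemma in_cube_list {d} (c : pt d) R j : In j (cube_list c R) <-> distinf j c <= Z.of_nat R.
Proof.
  unfold cube_list. rewrite in_map_iff. split.
  - intros [f [<- hf]]. apply in_box in hf. destruct hf as [_ h2].
    apply distinf_le_iff; [lia|]. intros n hn. rewrite coord_pt_of; auto.
  - intros h. exists (coord j). split.
    + apply pt_ext. intros n hn. rewrite coord_pt_of; auto.
    + apply in_box. split; [intros; apply coord_supp; auto|].
      intros n hn. rewrite distinf_le_iff in h by lia. auto.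
Qed.

Lemma cube_list_NoDup {d} (c : pt d) R : NoDup (cube_list c R).
Proof.
  unfold cube_list. apply NoDup_map_NoDup_ForallPairs; [|apply box_NoDup].
  intros f g hf hg h. apply in_box in hf, hg.
  apply functional_extensionality; intros n. destruct (Nat.lt_ge_cases n d).
  - rewrite <- (coord_pt_of d f n), <- (coord_pt_of d g n), h; auto.
  - rewrite (proj1 hf), (proj1 hg); auto.
Qed.

Open Scope R_scope.

Lemma Rpower_pos x a : 0 < Rpower x a.
Proof. apply exp_pos. Qed.

Lemma Rpower_1_l a : Rpower 1 a = 1.
Proof. unfold Rpower. rewrite ln_1, Rmult_0_r. apply exp_0. Qed.

Lemma Rpower_opp_le x y a : 0 < x <= y -> 0 <= a -> Rpower y (- a) <= Rpower x (- a).
Proof.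
  intros hx ha. rewrite !Rpower_Ropp. apply Rinv_le_contravar; [apply Rpower_pos|].
  apply Rle_Rpower_l; auto.
Qed.

Lemma Rpower_opp_add_nat (d : nat) s x : 0 < x -> Rpower x (- (INR d + s)) = / x ^ d * Rpower x (- s).
Proof. intros hx. rewrite Ropp_plus_distr, Rpower_plus, Rpower_Ropp, Rpower_pow; auto. Qed.

Lemma Rpower_2_opp_lt1 s : 0 < s -> Rpower 2 (- s) < 1.
Proof. intros hs. rewrite <- (Rpower_O 2) by lra. apply Rpower_lt; lra. Qed.

Definition tail_const (d : nat) (s : R) : R := 4 ^ d / (1 - Rpower 2 (- s)).

Lemma tail_const_pos d s : 0 < s -> 0 < tail_const d s.
Proof.
  intros hs. pose proof (Rpower_2_opp_lt1 s hs).
  apply Rdiv_lt_0_compat; [apply pow_lt|]; lra.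
Qed.

(* The fixed-point equation behind the choice of [tail_const]: one dyadic shell plus the rest. *)
Lemma tail_const_eq d s : 0 < s -> 4 ^ d + tail_const d s * Rpower 2 (- s) = tail_const d s.
Proof. intros hs. unfold tail_const. pose proof (Rpower_2_opp_lt1 s hs). field. lra. Qed.

Section Tail.
Context {d : nat} (s : R) (hs : 0 < s) (i : pt d).

Definition weight (j : pt d) : R := Rpower (IZR (distinf j i)) (- (INR d + s)).

Lemma shell_sum (m : nat) (P : list (pt d)) : (1 <= m)%nat -> NoDup P ->
  (forall j, In j P -> Z.of_nat m <= distinf j i < Z.of_nat (2 * m))%Z ->
  sumR weight P <= 4 ^ d * Rpower (INR m) (- s).
Proof.
  intros hm hP hr. assert (hm' : 0 < INR m) by (apply lt_0_INR; lia).
  assert (hl : (length P <= (4 * m) ^ d)%nat).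
  { transitivity (length (cube_list i (2 * m - 1))).
    - apply NoDup_incl_length; auto. intros j hj. apply in_cube_list. specialize (hr j hj); lia.
    - rewrite cube_list_length. apply Nat.pow_le_mono_l. lia. }
  apply le_INR in hl. rewrite pow_INR, mult_INR in hl. replace (INR 4) with 4 in hl by (simpl; lra).
  eapply Rle_trans; [apply (sumR_le_const _ _ (Rpower (INR m) (- (INR d + s))))|].
  - intros j hj. apply Rpower_opp_le; [|pose proof (pos_INR d); lra].
    specialize (hr j hj). rewrite INR_IZR_INZ in hm' |- *. split; auto. apply IZR_le; lia.
  - rewrite Rpower_opp_add_nat by auto. rewrite Rpow_mult_distr in hl.
    pose proof (Rpower_pos (INR m) (- s)). pose proof (pow_lt (INR m) d hm').
    apply Rle_trans with (4 ^ d * INR m ^ d * (/ INR m ^ d * Rpower (INR m) (- s))).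
    + apply Rmult_le_compat_r; auto. apply Rmult_le_pos; [apply Rlt_le, Rinv_0_lt_compat|]; lra.
    + right. field. lra.
Qed.

Lemma tail_dyadic k : forall (m : nat) (P : list (pt d)), (1 <= m)%nat -> NoDup P ->
  (forall j, In j P -> Z.of_nat m <= distinf j i < Z.of_nat (2 ^ k * m))%Z ->
  sumR weight P <= tail_const d s * Rpower (INR m) (- s).
Proof.
  induction k as [|k IH]; intros m P hm hP hr.
  - destruct P as [|j P].
    + pose proof (tail_const_pos d s hs); pose proof (Rpower_pos (INR m) (- s)).
      apply Rlt_le, Rmult_lt_0_compat; auto.
    + specialize (hr j (or_introl eq_refl)). simpl in hr. lia.
  - set (near := fun j => Z.ltb (distinf j i) (Z.of_nat (2 * m))).
    assert (hm' : 0 < INR m) by (apply lt_0_INR; lia).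
    assert (Hnear : sumR weight (filter near P) <= 4 ^ d * Rpower (INR m) (- s)).
    { apply shell_sum; [auto | apply NoDup_filter; auto|].
      intros j hj. apply filter_In in hj. destruct hj as [hj1 hj2]. apply Z.ltb_lt in hj2.
      specialize (hr j hj1); lia. }
    assert (Hfar : sumR weight (filter (fun j => negb (near j)) P) <=
                   tail_const d s * Rpower 2 (- s) * Rpower (INR m) (- s)).
    { rewrite Rmult_assoc, Rpower_mult_distr by lra.
      replace (2 * INR m) with (INR (2 * m)) by (rewrite mult_INR; simpl; lra).
      apply IH; [lia | apply NoDup_filter; auto|].
      intros j hj. apply filter_In in hj. destruct hj as [hj1 hj2].
      apply Bool.negb_true_iff, Z.ltb_ge in hj2. specialize (hr j hj1).
      rewrite Nat.pow_succ_r' in hr. lia. }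
    rewrite (sumR_filter_split weight near), <- (tail_const_eq d s hs). lra.
Qed.

Lemma tail_sum (m : nat) (P : list (pt d)) : (1 <= m)%nat -> NoDup P ->
  (forall j, In j P -> Z.of_nat m <= distinf j i)%Z ->
  sumR weight P <= tail_const d s * Rpower (INR m) (- s).
Proof.
  intros hm hP hr.
  set (F := fold_right Z.max 0%Z (map (fun j => distinf j i) P)).
  apply (tail_dyadic (Z.to_nat F)); auto.
  intros j hj. split; auto.
  assert (hF : (distinf j i <= F)%Z) by exact (fold_max_ge (fun j => distinf j i) P j hj).
  assert (hlt : (Z.to_nat F < 2 ^ Z.to_nat F * m)%nat)
    by (pose proof (Nat.pow_gt_lin_r 2 (Z.to_nat F) ltac:(lia)); nia).
  pose proof (distinf_nonneg j i). lia.
Qed.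

End Tail.

Lemma J_tail_sum {d} (J : pt d -> pt d -> R) s lam Lam (i : pt d) (m : nat) (P : list (pt d)) :
  0 < s -> 0 < Lam -> JP J s lam Lam -> (1 <= m)%nat -> NoDup P ->
  (forall j, In j P -> Z.of_nat m <= distinf j i)%Z ->
  sumR (J i) P <= Lam * tail_const d s * Rpower (INR m) (- s).
Proof.
  intros hs hL hJ hm hP hr. rewrite Rmult_assoc.
  eapply Rle_trans; [|apply Rmult_le_compat_l; [lra | apply (tail_sum s hs i m P hm hP hr)]].
  rewrite <- sumR_scal_l. apply sumR_le. intros j hj.
  assert (hne : i <> j).
  { intros <-. specialize (hr i hj). rewrite distinf_diag in hr. lia. }
  eapply Rle_trans; [apply (hJ i j hne)|].
  apply Rmult_le_compat_l; [lra|]. apply Rpower_opp_le; [|pose proof (pos_INR d); lra].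
  pose proof (distinf_ge1 j i (not_eq_sym hne)). pose proof (distinf_le_dist1 i j) as h1.
  rewrite distinf_sym in h1. split; [apply IZR_lt | apply IZR_le]; lia.
Qed.

Lemma H_value_ge_sum {d} (J : pt d -> pt d -> R) Gam u Su lst :
  H_value J Gam u Su -> NoDup lst -> Forall (Hindex Gam) lst -> sumR (Hterm J u) lst <= Su.
Proof. intros [H _] hnd hfa. apply H. exists lst; auto. Qed.

(* The bound makes [H(v)] finite (its partial sums have a least upper bound), so minimality applies to [v]. *)
Lemma minimizer_competitor {d} (J : pt d -> pt d -> R) Gam u v c :
  minimizer J Gam u -> config v -> (forall i, ~ Gam i -> v i = u i) ->
  (forall Su, H_value J Gam u Su -> forall lst, NoDup lst -> Forall (Hindex Gam) lst ->
     sumR (Hterm J v) lst <= Su - c) ->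
  c <= 0.
Proof.
  intros [Su [HSu Hmin]] hv hvu Hbound.
  set (E := fun x => exists lst : list (pt d * pt d), NoDup lst /\ Forall (Hindex Gam) lst /\
             x = fold_right Rplus 0 (map (Hterm J v) lst)).
  assert (hub : is_upper_bound E (Su - c)).
  { intros x [lst [h1 [h2 ->]]]. apply (Hbound Su HSu lst h1 h2). }
  destruct (completeness E) as [Sv HSv]; [exists (Su - c); auto | exists 0, []; repeat split; constructor|].
  assert (Su <= Sv) by (apply (Hmin v hv hvu); auto).
  pose proof (proj2 HSv _ hub). lra.
Qed.

Lemma minimizer_opp {d} (J : pt d -> pt d -> R) Gam (u : pt d -> Z) :
  minimizer J Gam u -> minimizer J Gam (fun i => (- u i)%Z).
Proof.
  assert (hopp : forall w : pt d -> Z, Hterm J (fun i => (- w i)%Z) = Hterm J w).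
  { intros w; apply functional_extensionality; intros p. unfold Hterm. rewrite Z.mul_opp_opp. reflexivity. }
  intros [Su [HSu Hm]]. exists Su. split; [unfold H_value; rewrite hopp; auto|].
  intros v hv hag Sv HSv. apply (Hm (fun i => (- v i)%Z)).
  - intros i; destruct (hv i) as [-> | ->]; auto.
  - intros i hi. rewrite hag by auto. lia.
  - unfold H_value in *. rewrite hopp; auto.
Qed.

Lemma sumR_indicator {d} (A : list (pt d)) (x : pt d) c : NoDup A ->
  sumR (fun i => if peqb x i then c else 0) A = if in_dec pt_eq_dec x A then c else 0.
Proof.
  induction A as [|a A IH]; intros hA; [reflexivity|].
  inversion hA; subst. rewrite sumR_cons, IH by auto. unfold peqb.
  destruct (pt_eq_dec x a) as [<-|hxa].
  - destruct (in_dec pt_eq_dec x A); [tauto|]. destruct (in_dec pt_eq_dec x (x :: A)); simpl in *; [lra|tauto].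
  - destruct (in_dec pt_eq_dec x A), (in_dec pt_eq_dec x (a :: A)) as [[|]|]; simpl in *; subst; tauto || lra.
Qed.

Lemma sumR_group_fst {d} (A : list (pt d)) (L : list (pt d * pt d)) (h : pt d * pt d -> R) :
  NoDup A -> (forall p, In p L -> ~ In (fst p) A -> h p = 0) ->
  sumR h L = sumR (fun i => sumR h (filter (fun p => peqb (fst p) i) L)) A.
Proof.
  intros hA. induction L as [|p L IH]; intros hh; [symmetry; apply sumR_zero|].
  rewrite sumR_cons, IH by (intros; apply hh; simpl; auto).
  transitivity (sumR (fun i => (if peqb (fst p) i then h p else 0) +
                               sumR h (filter (fun p => peqb (fst p) i) L)) A).
  - rewrite sumR_plus, sumR_indicator by auto. f_equal.
    destruct (in_dec pt_eq_dec (fst p) A); auto. apply hh; simpl; auto.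
  - apply sumR_ext; intros i _. simpl. destruct (peqb (fst p) i); rewrite ?sumR_cons; lra.
Qed.

Definition swap {A} (p : A * A) : A * A := (snd p, fst p).

Definition neg_cube {d} (u : pt d -> Z) (q : pt d) (r : nat) : list (pt d) :=
  filter (fun i => Z.eqb (u i) (-1)) (cube_list q r).

Definition neg_count {d} (u : pt d -> Z) (q : pt d) (r : nat) : nat := length (neg_cube u q r).

(* [depth q r i] is a lower bound for the l^oo distance from [i] in Q_r(q) to the outside of Q_r(q). *)
Definition depth {d} (q : pt d) (r : nat) (i : pt d) : nat := (r + 1 - Z.to_nat (distinf i q))%nat.

Definition escape_bound {d} (s Lam : R) (q : pt d) (u : pt d -> Z) (r : nat) : R :=
  sumR (fun i => Lam * tail_const d s * Rpower (INR (depth q r i)) (- s)) (neg_cube u q r).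

Lemma neg_cube_NoDup {d} (u : pt d -> Z) q r : NoDup (neg_cube u q r).
Proof. apply NoDup_filter, cube_list_NoDup. Qed.

Lemma in_neg_cube {d} (u : pt d -> Z) q r i :
  In i (neg_cube u q r) <-> u i = (-1)%Z /\ (distinf i q <= Z.of_nat r)%Z.
Proof. unfold neg_cube. rewrite filter_In, in_cube_list, Z.eqb_eq. tauto. Qed.

Lemma neg_count_mono {d} (u : pt d -> Z) q r r' : (r <= r')%nat -> (neg_count u q r <= neg_count u q r')%nat.
Proof.
  intros h. apply NoDup_incl_length; [apply neg_cube_NoDup|].
  intros i hi. apply in_neg_cube in hi. apply in_neg_cube. lia.
Qed.

Lemma depth_le_distinf {d} (q : pt d) r i j :
  (distinf i q <= Z.of_nat r)%Z -> (Z.of_nat r < distinf j q)%Z -> (Z.of_nat (depth q r i) <= distinf j i)%Z.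
Proof.
  intros hi hj. pose proof (distinf_triangle j i q). pose proof (distinf_nonneg i q). unfold depth. lia.
Qed.

Lemma J_sum_escape {d} (J : pt d -> pt d -> R) s lam Lam (u : pt d -> Z) q r i P :
  0 < s -> 0 < Lam -> JP J s lam Lam -> In i (neg_cube u q r) -> NoDup P ->
  (forall j, In j P -> ~ In j (neg_cube u q r) /\ u j = (-1)%Z) ->
  sumR (J i) P <= Lam * tail_const d s * Rpower (INR (depth q r i)) (- s).
Proof.
  intros hs hL hJ hi hP hout. apply in_neg_cube in hi.
  apply J_tail_sum with lam; auto; [unfold depth; lia|].
  intros j hj. apply depth_le_distinf; [tauto|].
  destruct (hout j hj) as [hnj huj]. destruct (Z.lt_ge_cases (Z.of_nat r) (distinf j q)); auto.
  exfalso; apply hnj, in_neg_cube; auto.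
Qed.

Section Flip.
Context {d : nat} (J : pt d -> pt d -> R) (s lam Lam : R) (q : pt d) (l : nat) (u : pt d -> Z).
Hypotheses (hJ0 : J_nonneg J) (hJ1 : J1 J) (hJP : JP J s lam Lam) (hs : 0 < s) (hL : 0 < Lam)
  (hu : config u) (hmin : minimizer J (cube l q) u).
Variable r : nat.
Hypothesis hrl : (r <= l)%nat.

Let A := neg_cube u q r.
Let Y := escape_bound s Lam q u r.
Let inA (i : pt d) : bool := if in_dec pt_eq_dec i A then true else false.
Let v (i : pt d) : Z := if inA i then 1%Z else u i.

Lemma inA_true i : inA i = true <-> In i A.
Proof. unfold inA. destruct (in_dec pt_eq_dec i A); split; auto; discriminate. Qed.

(* In the flipped configuration a pair touching [A] costs only through a remaining minus point,
   and such points lie outside Q_r(q), at distance at least [depth] from [A]. *)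
Let flip_cost (p : pt d * pt d) : R :=
  if inA (fst p) then (if Z.eqb (v (snd p)) (-1) then 2 * J (fst p) (snd p) else 0) else 0.

Lemma flip_cost_le L : NoDup L -> sumR flip_cost L <= 2 * Y.
Proof.
  intros hL'. rewrite (sumR_group_fst A); [|apply neg_cube_NoDup|].
  2: { intros p _ hp. unfold flip_cost. destruct (inA (fst p)) eqn:e; auto. apply inA_true in e; tauto. }
  unfold Y, escape_bound. fold A. rewrite <- sumR_scal_l. apply sumR_le. intros i hi.
  set (Li := filter (fun p => peqb (fst p) i) L).
  transitivity (2 * sumR (J i) (filter (fun j => Z.eqb (v j) (-1)) (map snd Li))).
  - rewrite <- sumR_filter, <- sumR_scal_l, sumR_map. right. apply sumR_ext. intros p hp.
    apply filter_In in hp. destruct hp as [_ hp]. apply peqb_true in hp.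
    unfold flip_cost. rewrite hp. replace (inA i) with true by (symmetry; apply inA_true; auto).
    destruct (Z.eqb (v (snd p)) (-1)); lra.
  - apply Rmult_le_compat_l; [lra|]. apply (J_sum_escape J s lam Lam u q r); auto.
    + apply NoDup_filter, NoDup_map_NoDup_ForallPairs; [|apply NoDup_filter; auto].
      intros [a b] [a' b'] h1 h2 e. apply filter_In in h1, h2. simpl in *.
      destruct h1 as [_ h1], h2 as [_ h2]. apply peqb_true in h1, h2. congruence.
    + intros j hj. apply filter_In in hj. destruct hj as [_ hj]. apply Z.eqb_eq in hj.
      unfold v in hj. destruct (inA j) eqn:e; [discriminate|].
      split; auto. intros hjA. apply inA_true in hjA. congruence.
Qed.

Lemma Hterm_flip_le p : orb (inA (fst p)) (inA (snd p)) = true -> Hterm J v p <= flip_cost p + flip_cost (swap p).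
Proof.
  intros hp. unfold flip_cost, swap, Hterm; simpl.
  pose proof (hJ0 (fst p) (snd p)). rewrite (hJ1 (snd p) (fst p)).
  unfold v. destruct (inA (fst p)), (inA (snd p)); simpl in hp; try discriminate;
    repeat match goal with |- context [u ?x] => destruct (hu x) as [-> | ->] end; simpl; lra.
Qed.

Lemma sumR_flip_touching lst : NoDup lst ->
  sumR (Hterm J v) (filter (fun p => orb (inA (fst p)) (inA (snd p))) lst) <= 4 * Y.
Proof.
  intros hnd. set (lin := filter _ lst).
  assert (hlin : NoDup lin) by (apply NoDup_filter; auto).
  apply Rle_trans with (sumR flip_cost lin + sumR flip_cost (map swap lin)).
  - rewrite sumR_map, <- sumR_plus. apply sumR_le. intros p hp.
    apply filter_In in hp. apply Hterm_flip_le; tauto.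
  - pose proof (flip_cost_le lin hlin).
    assert (sumR flip_cost (map swap lin) <= 2 * Y); [|lra].
    apply flip_cost_le, NoDup_map_NoDup_ForallPairs; auto.
    intros [a b] [a' b'] _ _ e; unfold swap in e; simpl in e; congruence.
Qed.

Variable P1 : list (pt d).
Hypotheses (hP1 : NoDup P1) (hP1u : forall j, In j P1 -> u j = 1%Z).

Let cross := list_prod A P1 ++ map swap (list_prod A P1).

Lemma cross_NoDup : NoDup cross.
Proof.
  pose proof (NoDup_list_prod A P1 (neg_cube_NoDup u q r) hP1).
  apply NoDup_app; auto.
  - apply NoDup_map_NoDup_ForallPairs; auto. intros [a b] [a' b'] _ _ e; unfold swap in e; simpl in e; congruence.
  - intros [a b] h1 h2. apply in_map_iff in h2. destruct h2 as [[a' b'] [e h2]].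
    unfold swap in e; simpl in e. inversion e; subst. apply in_prod_iff in h1, h2.
    destruct h1 as [h1 _], h2 as [_ h2]. apply in_neg_cube in h1. rewrite hP1u in h1 by auto. lia.
Qed.

Lemma cross_touching p : In p cross -> In (fst p) A \/ In (snd p) A.
Proof.
  intros h. apply in_app_or in h. destruct h as [h|h].
  - destruct p; apply in_prod_iff in h; simpl; tauto.
  - apply in_map_iff in h. destruct h as [[a b] [<- h]]. apply in_prod_iff in h; simpl; tauto.
Qed.

Lemma sumR_cross : sumR (Hterm J u) cross = 4 * sumR (fun i => sumR (J i) P1) A.
Proof.
  unfold cross. rewrite sumR_app, sumR_map, !sumR_list_prod, <- sumR_plus, <- sumR_scal_l.
  apply sumR_ext; intros i hi. rewrite <- sumR_plus, <- sumR_scal_l. apply sumR_ext; intros j hj.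
  apply in_neg_cube in hi. unfold Hterm, swap; simpl. rewrite (proj1 hi), (hP1u j hj), (hJ1 j i). simpl. lra.
Qed.

Lemma flip_energy_le Su lst : H_value J (cube l q) u Su ->
  NoDup lst -> Forall (Hindex (cube l q)) lst ->
  sumR (Hterm J v) lst <= Su - (4 * sumR (fun i => sumR (J i) P1) A - 4 * Y).
Proof.
  intros HSu hnd hfa.
  set (touch := fun p : pt d * pt d => orb (inA (fst p)) (inA (snd p))).
  rewrite (sumR_filter_split _ touch lst).
  set (lout := filter (fun p => negb (touch p)) lst).
  assert (hout : forall p, In p lout -> ~ In (fst p) A /\ ~ In (snd p) A).
  { intros p hp. apply filter_In in hp. destruct hp as [_ hp]. unfold touch in hp.
    rewrite <- !inA_true. destruct (inA (fst p)), (inA (snd p)); simpl in hp; split; congruence. }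
  assert (Eout : sumR (Hterm J v) lout = sumR (Hterm J u) lout).
  { apply sumR_ext. intros p hp. destruct (hout p hp) as [h1 h2]. unfold Hterm, v.
    destruct (inA (fst p)) eqn:e1; [apply inA_true in e1; tauto|].
    destruct (inA (snd p)) eqn:e2; [apply inA_true in e2; tauto|]. reflexivity. }
  assert (Hcube : forall i, In i A -> cube l q i).
  { intros i hi. apply in_neg_cube in hi. unfold cube. lia. }
  assert (Hadm : sumR (Hterm J u) (lout ++ cross) <= Su).
  { apply (H_value_ge_sum J (cube l q) u Su); auto.
    - apply NoDup_app; [apply NoDup_filter; auto | apply cross_NoDup|].
      intros p hp hk. apply cross_touching in hk. apply hout in hp. tauto.
    - apply Forall_app. split.
      + apply Forall_forall. intros p hp. apply filter_In in hp. rewrite Forall_forall in hfa. apply hfa; tauto.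
      + apply Forall_forall. intros p hp. apply cross_touching in hp. unfold Hindex.
        destruct hp; [left|right]; apply Hcube; auto. }
  rewrite sumR_app, sumR_cross in Hadm. pose proof (sumR_flip_touching lst hnd) as hin. fold touch in hin. lra.
Qed.

Lemma flip_interaction_le : sumR (fun i => sumR (J i) P1) A <= Y.
Proof.
  enough (4 * sumR (fun i => sumR (J i) P1) A - 4 * Y <= 0) by lra.
  apply (minimizer_competitor J (cube l q) u v); auto.
  - intros i. unfold v. destruct (inA i); auto.
  - intros i hi. unfold v. destruct (inA i) eqn:e; auto. apply inA_true, in_neg_cube in e.
    exfalso; apply hi. unfold cube. lia.
  - intros Su HSu lst. apply flip_energy_le; auto.
Qed.

End Flip.

Lemma J_lower_near {d} (J : pt d -> pt d -> R) s lam Lam (i j : pt d) (R : nat) :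
  JP J s lam Lam -> 0 < s -> 0 < lam -> i <> j -> (distinf j i <= Z.of_nat R)%Z ->
  lam * Rpower (INR d * INR R) (- (INR d + s)) <= J i j.
Proof.
  intros hJ hs hlam hne hR. eapply Rle_trans; [|apply (hJ i j hne)].
  apply Rmult_le_compat_l; [lra|]. pose proof (pos_INR d).
  apply Rpower_opp_le; [|lra].
  pose proof (distinf_ge1 i j hne). pose proof (distinf_le_dist1 i j). pose proof (dist1_le_distinf i j).
  rewrite distinf_sym in hR. split; [apply IZR_lt; lia|].
  rewrite <- mult_INR, INR_IZR_INZ. apply IZR_le. nia.
Qed.

Section Scale.
Context {d : nat} (J : pt d -> pt d -> R) (s lam Lam : R) (q : pt d) (l : nat) (u : pt d -> Z).
Hypotheses (hJ0 : J_nonneg J) (hJ1 : J1 J) (hJP : JP J s lam Lam) (hs : 0 < s) (hlam : 0 < lam) (hL : 0 < Lam)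
  (hu : config u) (hmin : minimizer J (cube l q) u).
Variable r : nat.
Hypothesis hrl : (r <= l)%nat.

Let A := neg_cube u q r.
Let outside (j : pt d) : bool := if in_dec pt_eq_dec j A then false else true.

Lemma interaction_outside_le (P : list (pt d)) : NoDup P -> (forall j, In j P -> ~ In j A) ->
  sumR (fun i => sumR (J i) P) A <= 2 * escape_bound s Lam q u r.
Proof.
  intros hP hPA.
  set (isplus := fun j => Z.eqb (u j) 1).
  transitivity (sumR (fun i => sumR (J i) (filter isplus P)) A +
                sumR (fun i => sumR (J i) (filter (fun j => negb (isplus j)) P)) A).
  { rewrite <- sumR_plus. right. apply sumR_ext; intros. apply sumR_filter_split. }
  assert (sumR (fun i => sumR (J i) (filter isplus P)) A <= escape_bound s Lam q u r).
  { apply (flip_interaction_le J s lam Lam q l u); auto; [apply NoDup_filter; auto|].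
    intros j hj. apply filter_In in hj. apply Z.eqb_eq; tauto. }
  assert (sumR (fun i => sumR (J i) (filter (fun j => negb (isplus j)) P)) A <= escape_bound s Lam q u r).
  { apply sumR_le. intros i hi. apply (J_sum_escape J s lam Lam u q r); auto; [apply NoDup_filter; auto|].
    intros j hj. apply filter_In in hj. destruct hj as [hj1 hj2]. split; [apply hPA; auto|].
    unfold isplus in hj2. destruct (hu j) as [e|e]; rewrite e in *; [discriminate | auto]. }
  lra.
Qed.

Lemma interaction_near_ge (R : nat) i : (1 <= R)%nat -> In i A ->
  (INR (2 * R + 1) ^ d - INR (neg_count u q r)) * (lam * Rpower (INR d * INR R) (- (INR d + s)))
  <= sumR (J i) (filter outside (cube_list q (r + R))).
Proof.
  intros hR hi.
  set (g := lam * Rpower (INR d * INR R) (- (INR d + s))).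
  set (Ci := filter outside (cube_list i R)).
  assert (hlen : INR (2 * R + 1) ^ d - INR (neg_count u q r) <= INR (length Ci)).
  { rewrite <- pow_INR, <- (cube_list_length i R), <- (filter_length outside), plus_INR.
    assert (hin : (length (filter (fun j => negb (outside j)) (cube_list i R)) <= neg_count u q r)%nat).
    { apply NoDup_incl_length; [apply NoDup_filter, cube_list_NoDup|].
      intros j hj. apply filter_In in hj. destruct hj as [_ hj]. unfold outside in hj.
      destruct (in_dec pt_eq_dec j A); auto; discriminate. }
    apply le_INR in hin. unfold Ci. lra. }
  assert (hg : 0 <= g) by (pose proof (Rpower_pos (INR d * INR R) (- (INR d + s))); unfold g; nra).
  apply Rle_trans with (INR (length Ci) * g); [apply Rmult_le_compat_r; auto|].
  apply Rle_trans with (sumR (J i) Ci).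
  - apply sumR_ge_const. intros j hj. apply filter_In in hj. destruct hj as [hj1 hj2].
    apply (J_lower_near J s lam Lam); auto; [|apply in_cube_list; auto].
    intros <-. unfold outside in hj2. destruct (in_dec pt_eq_dec i A); [discriminate | tauto].
  - apply sumR_incl; [apply NoDup_filter, cube_list_NoDup | | intros; apply hJ0].
    intros j hj. apply filter_In in hj. destruct hj as [hj1 hj2]. apply filter_In. split; auto.
    apply in_cube_list in hj1. apply in_cube_list. apply in_neg_cube in hi.
    pose proof (distinf_triangle j i q). lia.
Qed.

Lemma scale_inequality (R : nat) : (1 <= R)%nat ->
  INR (neg_count u q r) * (INR (2 * R + 1) ^ d - INR (neg_count u q r)) *
    (lam * Rpower (INR d * INR R) (- (INR d + s)))
  <= 2 * escape_bound s Lam q u r.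
Proof.
  intros hR. eapply Rle_trans; [|apply (interaction_outside_le (filter outside (cube_list q (r + R))))].
  - rewrite Rmult_assoc. apply sumR_ge_const. intros i hi. apply interaction_near_ge; auto.
  - apply NoDup_filter, cube_list_NoDup.
  - intros j hj. apply filter_In in hj. destruct hj as [_ hj]. unfold outside in hj.
    destruct (in_dec pt_eq_dec j A); [discriminate | auto].
Qed.

End Scale.

Section PowerSum.
Variable s : R.
Hypothesis hs : 0 < s < 1.

Definition power_sum (n : nat) : R := sumR (fun t => Rpower (INR t) (- s)) (seq 1 n).

Lemma power_sum_S n : power_sum (S n) = power_sum n + Rpower (INR (S n)) (- s).
Proof. unfold power_sum. rewrite seq_S, sumR_app, sumR_cons, sumR_nil. replace (1 + n)%nat with (S n) by lia. ring. Qed.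

Lemma power_sum_mono n m : (n <= m)%nat -> power_sum n <= power_sum m.
Proof.
  induction 1 as [|m _ IH]; [lra|].
  rewrite power_sum_S. pose proof (Rpower_pos (INR (S m)) (- s)). lra.
Qed.

Lemma power_sum_add n b : (1 <= n)%nat -> power_sum (n + b) <= power_sum n + INR b * Rpower (INR n) (- s).
Proof.
  intros hn. induction b as [|b IH]; [rewrite Nat.add_0_r; simpl; lra|].
  rewrite Nat.add_succ_r, power_sum_S, (S_INR b).
  assert (Rpower (INR (S (n + b))) (- s) <= Rpower (INR n) (- s)).
  { apply Rpower_opp_le; [split; [apply lt_0_INR | apply le_INR]; lia | lra]. }
  lra.
Qed.

Lemma sum_shifted_le (rho a n : nat) :
  sumR (fun r => if Nat.leb rho r then Rpower (INR (r + 1 - rho)) (- s) else 0) (seq a n) <= power_sum (a + n - rho).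
Proof.
  induction n as [|n IH].
  - apply sumR_nonneg. intros; apply Rlt_le, Rpower_pos.
  - rewrite seq_S, sumR_app, sumR_cons, sumR_nil.
    destruct (Nat.leb_spec rho (a + n)).
    + replace (a + S n - rho)%nat with (S (a + n - rho)) by lia. rewrite power_sum_S.
      replace (a + n + 1 - rho)%nat with (S (a + n - rho)) by lia. lra.
    + assert (power_sum (a + n - rho) <= power_sum (a + S n - rho)) by (apply power_sum_mono; lia). lra.
Qed.

Definition harmonic_const : R := Rpower 2 (1 - s) / (Rpower 2 (1 - s) - 1).

Lemma Rpower_2_gt1 : 1 < Rpower 2 (1 - s).
Proof. rewrite <- (Rpower_O 2) at 1 by lra. apply Rpower_lt; lra. Qed.

Lemma harmonic_const_ge1 : 1 <= harmonic_const.
Proof.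
  pose proof Rpower_2_gt1. unfold harmonic_const.
  apply (Rmult_le_reg_r (Rpower 2 (1 - s) - 1)); [lra|]. field_simplify; lra.
Qed.

(* [harmonic_const] satisfies [C + 1 <= C * 2^(1-s)], which closes the doubling recursion. *)
Lemma power_sum_dyadic k : power_sum (2 ^ k) <= harmonic_const * Rpower (INR (2 ^ k)) (1 - s).
Proof.
  pose proof Rpower_2_gt1 as ha. pose proof harmonic_const_ge1 as hC.
  induction k as [|k IH].
  - unfold power_sum; simpl. rewrite sumR_cons, sumR_nil, !Rpower_1_l. lra.
  - assert (hp : 0 < INR (2 ^ k)) by (apply lt_0_INR, Nat.neq_0_lt_0, Nat.pow_nonzero; lia).
    replace (2 ^ S k)%nat with (2 ^ k + 2 ^ k)%nat by (simpl; lia).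
    eapply Rle_trans; [apply power_sum_add; pose proof (Nat.pow_nonzero 2 k); lia|].
    replace (INR (2 ^ k) * Rpower (INR (2 ^ k)) (- s)) with (Rpower (INR (2 ^ k)) (1 - s))
      by (unfold Rminus; rewrite Rpower_plus, Rpower_1; auto).
    rewrite plus_INR, Rplus_diag, <- Rpower_mult_distr by lra.
    pose proof (Rpower_pos (INR (2 ^ k)) (1 - s)).
    assert (harmonic_const + 1 <= harmonic_const * Rpower 2 (1 - s)).
    { unfold harmonic_const. apply (Rmult_le_reg_r (Rpower 2 (1 - s) - 1)); [lra|]. field_simplify; nra. }
    nra.
Qed.

End PowerSum.

(* Each point of Q_(2M)(q) enters the escape bounds of the radii r in [M, 2M) with the
   consecutive depths r + 1 - |i - q|_oo, whence a single power sum per point. *)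
Lemma sum_escape_bound_le {d} s Lam (q : pt d) (u : pt d -> Z) (M : nat) : 0 < s < 1 -> 0 < Lam ->
  sumR (escape_bound s Lam q u) (seq M M) <=
  Lam * tail_const d s * INR (neg_count u q (M + M)) * power_sum s (M + M).
Proof.
  intros hs hL. set (B := neg_cube u q (M + M)).
  set (rho := fun i : pt d => Z.to_nat (distinf i q)).
  set (c := Lam * tail_const d s).
  assert (hc : 0 < c) by (pose proof (tail_const_pos d s (proj1 hs)); unfold c; nra).
  apply Rle_trans with (sumR (fun r => sumR (fun i => c *
      (if Nat.leb (rho i) r then Rpower (INR (r + 1 - rho i)) (- s) else 0)) B) (seq M M)).
  - apply sumR_le. intros r hr. apply in_seq in hr.
    apply Rle_trans with (sumR (fun i => c * Rpower (INR (depth q r i)) (- s)) (filter (fun i => Nat.leb (rho i) r) B)).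
    + apply sumR_incl; [apply neg_cube_NoDup| |].
      * intros i hi. apply in_neg_cube in hi. apply filter_In. split.
        -- apply in_neg_cube. lia.
        -- apply Nat.leb_le. unfold rho. lia.
      * intros i _. pose proof (Rpower_pos (INR (depth q r i)) (- s)). nra.
    + rewrite <- sumR_filter. right. apply sumR_ext. intros i _.
      destruct (Nat.leb (rho i) r); [reflexivity | ring].
  - rewrite sumR_swap.
    apply Rle_trans with (sumR (fun _ => c * power_sum s (M + M)) B).
    + apply sumR_le. intros i _. rewrite sumR_scal_l. apply Rmult_le_compat_l; [lra|].
      eapply Rle_trans; [apply sum_shifted_le | apply power_sum_mono; lia].
    + eapply Rle_trans; [apply sumR_le_const; intros; apply Rle_refl|]. unfold neg_count; fold B. right; ring.
Qed.

Definition near_const (d : nat) : R := (2 / INR d) ^ d / INR d.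

Lemma near_const_pos d : (1 <= d)%nat -> 0 < near_const d.
Proof.
  intros h. assert (0 < INR d) by (apply lt_0_INR; lia).
  apply Rdiv_lt_0_compat; auto. apply pow_lt, Rdiv_lt_0_compat; lra.
Qed.

Lemma near_mass_ge (d R : nat) s lam : (1 <= d)%nat -> (1 <= R)%nat -> 0 < s < 1 -> 0 < lam ->
  lam * near_const d * Rpower (INR R) (- s) <=
  INR (2 * R + 1) ^ d * (lam * Rpower (INR d * INR R) (- (INR d + s))).
Proof.
  intros hd hR hs hl.
  assert (hd' : 1 <= INR d) by (apply (le_INR 1); lia).
  assert (hR' : 1 <= INR R) by (apply (le_INR 1); lia).
  rewrite Rpower_opp_add_nat, <- Rpower_mult_distr by nra.
  assert (h1 : / INR d <= Rpower (INR d) (- s)).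
  { rewrite <- (Rpower_1 (INR d)) at 1 by lra. rewrite <- Rpower_Ropp. apply Rle_Rpower; lra. }
  assert (h2 : (2 * INR R) ^ d <= INR (2 * R + 1) ^ d).
  { apply pow_incr. rewrite plus_INR, mult_INR. simpl. split; lra. }
  pose proof (Rpower_pos (INR R) (- s)).
  assert (hx : 0 < (INR d * INR R) ^ d) by (apply pow_lt; nra).
  apply Rle_trans with ((2 * INR R) ^ d * (lam * (/ (INR d * INR R) ^ d * (/ INR d * Rpower (INR R) (- s))))).
  - right. unfold near_const, Rdiv. rewrite !Rpow_mult_distr, pow_inv. field.
    repeat split; try apply pow_nonzero; lra.
  - apply Rmult_le_compat; try lra; [apply pow_le; lra| |].
    + apply Rmult_le_pos; [lra|]. apply Rmult_le_pos; [apply Rlt_le, Rinv_0_lt_compat; auto|].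
      apply Rmult_le_pos; [apply Rlt_le, Rinv_0_lt_compat|]; lra.
    + apply Rmult_le_compat_l; [lra|]. apply Rmult_le_compat_l; [apply Rlt_le, Rinv_0_lt_compat; auto|].
      apply Rmult_le_compat_r; lra.
Qed.

Definition annulus_const (d : nat) (s Lam : R) : R := 8 * Lam * tail_const d s * harmonic_const s.

Lemma annulus_const_pos d s Lam : 0 < s < 1 -> 0 < Lam -> 0 < annulus_const d s Lam.
Proof.
  intros hs hL. pose proof (tail_const_pos d s (proj1 hs)). pose proof (harmonic_const_ge1 s hs).
  unfold annulus_const. apply Rmult_lt_0_compat; [apply Rmult_lt_0_compat; [apply Rmult_lt_0_compat|]|]; lra.
Qed.

Lemma power_sum_double_dyadic s k : 0 < s < 1 ->
  power_sum s (2 ^ k + 2 ^ k) <= harmonic_const s * (2 * INR (2 ^ k)) * Rpower (INR (2 ^ k)) (- s).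
Proof.
  intros hs. set (M := (2 ^ k)%nat).
  assert (hM : 1 <= INR M) by (apply (le_INR 1), Nat.neq_0_lt_0, Nat.pow_nonzero; lia).
  replace (M + M)%nat with (2 ^ S k)%nat by (unfold M; simpl; lia).
  eapply Rle_trans; [apply power_sum_dyadic; auto|].
  pose proof (harmonic_const_ge1 s hs).
  replace (2 ^ S k)%nat with (M + M)%nat by (unfold M; simpl; lia).
  rewrite Rmult_assoc. apply Rmult_le_compat_l; [lra|].
  rewrite plus_INR, Rplus_diag. unfold Rminus. rewrite Rpower_plus, Rpower_1 by lra.
  apply Rmult_le_compat_l; [lra|]. apply Rpower_opp_le; lra.
Qed.

Section Annulus.
Context {d : nat} (J : pt d -> pt d -> R) (s lam Lam : R) (q : pt d) (l : nat) (u : pt d -> Z).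
Hypotheses (hJ0 : J_nonneg J) (hJ1 : J1 J) (hJP : JP J s lam Lam) (hs : 0 < s < 1) (hlam : 0 < lam)
  (hL : lam <= Lam) (hu : config u) (hmin : minimizer J (cube l q) u) (hd : (1 <= d)%nat).

(* Summing [scale_inequality] over the radii r in [M, 2M), with (2R+1)^d at least twice the
   number of minus points in Q_(2M)(q), so that each term is at least V_M (2R+1)^d / 2. *)
Lemma annulus_inequality (k R : nat) : let M := (2 ^ k)%nat in
  (M + M <= l)%nat -> (1 <= R)%nat -> (2 * neg_count u q (M + M) <= (2 * R + 1) ^ d)%nat ->
  INR (neg_count u q M) * lam * near_const d * Rpower (INR R) (- s) <=
  annulus_const d s Lam * INR (neg_count u q (M + M)) * Rpower (INR M) (- s).
Proof.
  intros M hMl hR hT.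
  assert (hM : 1 <= INR M) by (apply (le_INR 1), Nat.neq_0_lt_0, Nat.pow_nonzero; lia).
  set (T := INR (2 * R + 1) ^ d).
  set (g := lam * Rpower (INR d * INR R) (- (INR d + s))).
  set (V := INR (neg_count u q M)). set (W := INR (neg_count u q (M + M))).
  assert (hg : 0 <= g) by (pose proof (Rpower_pos (INR d * INR R) (- (INR d + s))); unfold g; nra).
  assert (hTW : 2 * W <= T).
  { unfold T, W. rewrite <- pow_INR. replace 2 with (INR 2) by (simpl; lra). rewrite <- mult_INR. apply le_INR; auto. }
  assert (hV0 : 0 <= V) by apply pos_INR.
  assert (hsum : INR M * (V * (T / 2) * g) <= 2 * (Lam * tail_const d s * W * power_sum s (M + M))).
  { apply Rle_trans with (sumR (fun r => INR (neg_count u q r) * (T - INR (neg_count u q r)) * g) (seq M M)).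
    - rewrite <- (length_seq M M) at 1. apply sumR_ge_const. intros r hr. apply in_seq in hr.
      assert (V <= INR (neg_count u q r)) by (apply le_INR, neg_count_mono; lia).
      assert (INR (neg_count u q r) <= W) by (apply le_INR, neg_count_mono; lia).
      apply Rmult_le_compat_r; auto. apply Rmult_le_compat; lra.
    - apply Rle_trans with (sumR (fun r => 2 * escape_bound s Lam q u r) (seq M M)).
      + apply sumR_le. intros r hr. apply in_seq in hr.
        apply (scale_inequality J s lam Lam q l u); auto; lia || lra.
      + rewrite sumR_scal_l. apply Rmult_le_compat_l; [lra|]. apply sum_escape_bound_le; auto; lra. }
  pose proof (near_mass_ge d R s lam hd hR hs hlam) as hTg. fold T g in hTg.
  pose proof (power_sum_double_dyadic s k hs) as hG. fold M in hG.
  pose proof (tail_const_pos d s (proj1 hs)). pose proof (harmonic_const_ge1 s hs).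
  pose proof (Rpower_pos (INR M) (- s)). pose proof (Rpower_pos (INR R) (- s)).
  assert (hW0 : 0 <= W) by apply pos_INR.
  unfold annulus_const. fold V W.
  apply (Rmult_le_reg_l (INR M / 2)); [lra|].
  assert (INR M * V * (lam * near_const d * Rpower (INR R) (- s)) <= INR M * V * (T * g)) by
    (apply Rmult_le_compat_l; [nra | auto]).
  assert (Lam * tail_const d s * W * power_sum s (M + M) <=
          Lam * tail_const d s * W * (harmonic_const s * (2 * INR M) * Rpower (INR M) (- s))) by
    (apply Rmult_le_compat_l; [apply Rmult_le_pos; [nra | lra] | auto]).
  nra.
Qed.

End Annulus.

Lemma exists_scale (d W : nat) : (1 <= d)%nat -> (1 <= W)%nat ->
  exists R, (1 <= R)%nat /\ (2 * W <= (2 * R + 1) ^ d)%nat /\ (R ^ d <= 2 * W)%nat.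
Proof.
  intros hd hW.
  assert (hdesc : forall N, (1 <= N)%nat -> (2 * W <= (2 * N + 1) ^ d)%nat ->
     exists R, (1 <= R)%nat /\ (2 * W <= (2 * R + 1) ^ d)%nat /\ (R ^ d <= 2 * W)%nat).
  { induction N as [|N IH]; intros h1 h2; [lia|].
    destruct (Nat.eq_dec N 0) as [->|e].
    - exists 1%nat. rewrite Nat.pow_1_l. repeat split; auto; lia.
    - destruct (Nat.le_gt_cases (2 * W) ((2 * N + 1) ^ d)) as [h|h]; [apply IH; auto; lia|].
      exists (S N). split; [lia|]. split; auto.
      assert (S N ^ d <= (2 * N + 1) ^ d)%nat by (apply Nat.pow_le_mono_l; lia). lia. }
  apply (hdesc (2 * W)%nat); [lia|].
  assert (2 * (2 * W) + 1 <= (2 * (2 * W) + 1) ^ d)%nat; [|lia].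
  destruct d as [|d]; [lia|]. rewrite Nat.pow_succ_r'.
  assert (1 <= (2 * (2 * W) + 1) ^ d)%nat by (apply Nat.neq_0_lt_0, Nat.pow_nonzero; lia). nia.
Qed.

Lemma Rpower_nat_root (d : nat) x s : (1 <= d)%nat -> 0 < x -> Rpower x s = Rpower (x ^ d) (s / INR d).
Proof.
  intros hd hx. assert (0 < INR d) by (apply lt_0_INR; lia).
  rewrite <- Rpower_pow, Rpower_mult by auto. f_equal. field. lra.
Qed.

Lemma Rpower_le_of_pow_le (d : nat) s a delta R M : (1 <= d)%nat -> 0 < s <= INR d -> 1 <= a ->
  0 < delta -> 0 < R -> 0 < M -> R ^ d <= a * delta * M ^ d ->
  Rpower R s <= a * Rpower delta (s / INR d) * Rpower M s.
Proof.
  intros hd hs ha hdl hR hM hRd.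
  assert (hdr : 0 < INR d) by (apply lt_0_INR; lia).
  assert (hsd : 0 < s / INR d <= 1).
  { split; [apply Rdiv_lt_0_compat; lra|]. apply Rmult_le_reg_r with (INR d); auto.
    field_simplify; lra. }
  rewrite (Rpower_nat_root d R s), (Rpower_nat_root d M s) by auto.
  apply Rle_trans with (Rpower (a * delta * M ^ d) (s / INR d)).
  - apply Rle_Rpower_l; [lra|]. split; auto. apply pow_lt; auto.
  - assert (hMd : 0 < M ^ d) by (apply pow_lt; auto).
    rewrite <- !Rpower_mult_distr by (try apply Rmult_lt_0_compat; lra).
    assert (Rpower a (s / INR d) <= a).
    { rewrite <- (Rpower_1 a) at 2 by lra. apply Rle_Rpower; lra. }
    pose proof (Rpower_pos delta (s / INR d)). pose proof (Rpower_pos (M ^ d) (s / INR d)).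
    apply Rmult_le_compat_r; [lra|]. apply Rmult_le_compat_r; lra.
Qed.

(* Were [W < delta (2M)^d], then [R^s <= 2^(d+1) delta^(s/d) M^s], and the annulus inequality
   would give [V < delta M^d]. *)
Lemma doubling_real (d : nat) s c K delta M V W R : (1 <= d)%nat -> 0 < s < 1 -> 0 < c -> 0 < K -> 0 < delta ->
  Rpower delta (s / INR d) * (K * 2 ^ (2 * d + 1)) <= c ->
  1 <= M -> 1 <= R -> R ^ d <= 2 * W -> delta * M ^ d <= V ->
  V * c * Rpower R (- s) <= K * W * Rpower M (- s) -> delta * (2 * M) ^ d <= W.
Proof.
  intros hd hs hc hK hdl hth hM hR hRW hV hann.
  destruct (Rle_lt_dec (delta * (2 * M) ^ d) W) as [ok|bad]; auto. exfalso.
  rewrite Rpow_mult_distr in bad.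
  assert (hRs : Rpower R s <= 2 ^ (d + 1) * Rpower delta (s / INR d) * Rpower M s).
  { apply Rpower_le_of_pow_le; auto; try lra.
    - split; [lra|]. apply Rle_trans with 1; [lra | apply (le_INR 1); auto].
    - apply pow_R1_Rle; lra.
    - pose proof (pow_lt M d ltac:(lra)). rewrite pow_add. nra. }
  set (rho := Rpower R s) in *. set (p := Rpower M s) in *. set (e := Rpower delta (s / INR d)) in *.
  assert (hrho : 0 < rho) by apply Rpower_pos. assert (hp : 0 < p) by apply Rpower_pos.
  assert (he : 0 < e) by apply Rpower_pos.
  assert (hann' : V * c * p <= K * W * rho).
  { rewrite !Rpower_Ropp in hann. fold rho p in hann.
    apply (Rmult_le_compat_r (rho * p)) in hann; [|nra].
    replace (V * c * / rho * (rho * p)) with (V * c * p) in hann by (field; lra).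
    replace (K * W * / p * (rho * p)) with (K * W * rho) in hann by (field; lra). auto. }
  assert (hW0 : 0 < W) by (pose proof (pow_R1_Rle R d hR); lra).
  assert (hlt : K * W * rho < e * (K * 2 ^ (2 * d + 1)) * (delta * M ^ d) * p).
  { replace (e * (K * 2 ^ (2 * d + 1)) * (delta * M ^ d) * p)
      with (K * (delta * (2 ^ d * M ^ d)) * (2 ^ (d + 1) * e * p))
      by (replace (2 * d + 1)%nat with (d + (d + 1))%nat by lia; rewrite (pow_add 2 d (d + 1)); ring).
    apply Rle_lt_trans with (K * W * (2 ^ (d + 1) * e * p)).
    - apply Rmult_le_compat_l; [nra | auto].
    - apply Rmult_lt_compat_r; [pose proof (pow_lt 2 (d + 1)); nra|]. apply Rmult_lt_compat_l; auto. }
  assert (e * (K * 2 ^ (2 * d + 1)) * (delta * M ^ d) <= c * V).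
  { pose proof (pow_lt 2 (2 * d + 1) ltac:(lra)) as h2. pose proof (pow_lt M d ltac:(lra)).
    apply Rmult_le_compat; auto; [apply Rmult_le_pos; [|apply Rmult_le_pos] | apply Rmult_le_pos]; lra. }
  nra.
Qed.

Definition density_const (d : nat) (s lam Lam : R) : R :=
  Rmin 1 (Rpower (lam * near_const d / (annulus_const d s Lam * 2 ^ (2 * d + 1))) (INR d / s)).

Lemma density_const_spec d s lam Lam : (1 <= d)%nat -> 0 < s < 1 -> 0 < lam -> 0 < Lam ->
  0 < density_const d s lam Lam /\ density_const d s lam Lam <= 1 /\
  Rpower (density_const d s lam Lam) (s / INR d) * (annulus_const d s Lam * 2 ^ (2 * d + 1))
    <= lam * near_const d.
Proof.
  intros hd hs hlam hL. assert (0 < INR d) by (apply lt_0_INR; lia).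
  pose proof (near_const_pos d hd). pose proof (annulus_const_pos d s Lam hs hL).
  assert (hK : 0 < annulus_const d s Lam * 2 ^ (2 * d + 1)) by (pose proof (pow_lt 2 (2 * d + 1)); nra).
  set (theta := lam * near_const d / (annulus_const d s Lam * 2 ^ (2 * d + 1))).
  assert (hth : 0 < theta) by (apply Rdiv_lt_0_compat; nra).
  unfold density_const; fold theta.
  assert (hpos : 0 < Rmin 1 (Rpower theta (INR d / s))) by (apply Rmin_case; [lra | apply Rpower_pos]).
  split; [|split]; auto; [apply Rmin_l|].
  apply Rle_trans with (Rpower (Rpower theta (INR d / s)) (s / INR d) * (annulus_const d s Lam * 2 ^ (2 * d + 1))).
  - apply Rmult_le_compat_r; [lra|]. apply Rle_Rpower_l; [apply Rlt_le, Rdiv_lt_0_compat; lra|].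
    split; auto. apply Rmin_r.
  - rewrite Rpower_mult. replace (INR d / s * (s / INR d)) with 1 by (field; lra).
    rewrite Rpower_1 by auto. unfold theta. right. field. repeat split; try apply pow_nonzero; lra.
Qed.

Section Density.
Context {d : nat} (J : pt d -> pt d -> R) (s lam Lam : R) (q : pt d) (l : nat) (u : pt d -> Z).
Hypotheses (hJ0 : J_nonneg J) (hJ1 : J1 J) (hJP : JP J s lam Lam) (hs : 0 < s < 1) (hlam : 0 < lam)
  (hL : lam <= Lam) (hu : config u) (hmin : minimizer J (cube l q) u) (hd : (1 <= d)%nat).

Lemma density_doubling k : (2 ^ S k <= l)%nat -> (1 <= neg_count u q 1)%nat ->
  density_const d s lam Lam * INR (2 ^ k) ^ d <= INR (neg_count u q (2 ^ k)) ->
  density_const d s lam Lam * INR (2 ^ S k) ^ d <= INR (neg_count u q (2 ^ S k)).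
Proof.
  intros hkl hV1 IH.
  destruct (density_const_spec d s lam Lam hd hs hlam ltac:(lra)) as [hdl [_ hth]].
  set (M := (2 ^ k)%nat) in *.
  assert (hM : (1 <= M)%nat) by (apply Nat.neq_0_lt_0, Nat.pow_nonzero; lia).
  replace (2 ^ S k)%nat with (M + M)%nat in * by (unfold M; simpl; lia).
  assert (hW1 : (1 <= neg_count u q (M + M))%nat) by (eapply Nat.le_trans; [apply hV1 | apply neg_count_mono; lia]).
  destruct (exists_scale d (neg_count u q (M + M)) hd hW1) as [R [hR [hT hRd]]].
  pose proof (annulus_inequality J s lam Lam q l u hJ0 hJ1 hJP hs hlam hL hu hmin hd k R hkl hR hT) as hann.
  fold M in hann. rewrite plus_INR, Rplus_diag.
  apply (doubling_real d s (lam * near_const d) (annulus_const d s Lam) (density_const d s lam Lam) (INR M)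
    (INR (neg_count u q M)) _ (INR R)); auto.
  - pose proof (near_const_pos d hd). nra.
  - apply annulus_const_pos; lra.
  - apply (le_INR 1); auto.
  - apply (le_INR 1); auto.
  - rewrite <- pow_INR. replace 2 with (INR 2) by reflexivity. rewrite <- mult_INR. apply le_INR; auto.
  - rewrite <- Rmult_assoc. auto.
Qed.

Lemma density_lower_bound : (1 <= neg_count u q 1)%nat ->
  density_const d s lam Lam / 2 ^ d * INR l ^ d <= INR (neg_count u q l).
Proof.
  intros hV1.
  destruct (density_const_spec d s lam Lam hd hs hlam ltac:(lra)) as [hdl [hdl1 _]].
  destruct (Nat.eq_dec l 0) as [->|hl0].
  - simpl INR. rewrite pow_i by lia. rewrite Rmult_0_r. apply pos_INR.
  - set (k := Nat.log2 l). destruct (Nat.log2_spec l) as [hk1 hk2]; [lia|]. fold k in hk1, hk2.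
    assert (hdyad : forall j, (j <= k)%nat -> density_const d s lam Lam * INR (2 ^ j) ^ d <= INR (neg_count u q (2 ^ j))).
    { induction j as [|j IH]; intros hj.
      - simpl. rewrite pow1. apply le_INR in hV1. simpl in hV1. lra.
      - apply density_doubling; auto; [|apply IH; lia].
        assert (2 ^ S j <= 2 ^ k)%nat by (apply Nat.pow_le_mono_r; lia). lia. }
    specialize (hdyad k (le_n k)).
    assert (INR (neg_count u q (2 ^ k)) <= INR (neg_count u q l)) by (apply le_INR, neg_count_mono; lia).
    assert (hl : INR l ^ d <= 2 ^ d * INR (2 ^ k) ^ d).
    { rewrite <- Rpow_mult_distr. apply pow_incr. split; [apply pos_INR|].
      replace 2 with (INR 2) by reflexivity. rewrite <- mult_INR. apply le_INR.
      rewrite Nat.pow_succ_r' in hk2. lia. }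
    assert (h2d : 0 < 2 ^ d) by (apply pow_lt; lra).
    apply Rle_trans with (density_const d s lam Lam * INR (2 ^ k) ^ d); [|lra].
    unfold Rdiv. rewrite Rmult_assoc. apply Rmult_le_compat_l; [lra|].
    apply Rmult_le_reg_l with (2 ^ d); auto. field_simplify; lra.
Qed.

End Density.

Lemma card_neg_cube {d} (u : pt d -> Z) q l n :
  card_is (fun i => u i = (-1)%Z /\ cube l q i) n -> n = neg_count u q l.
Proof.
  intros [L [hnd [hin <-]]]. unfold neg_count.
  assert (hiff : forall x, In x L <-> In x (neg_cube u q l)).
  { intros x. rewrite hin, in_neg_cube. unfold cube. tauto. }
  apply Nat.le_antisymm; apply NoDup_incl_length; auto using neg_cube_NoDup; intros x hx; apply hiff; auto.
Qed.

Lemma neg_count_1 {d} (u : pt d -> Z) q j : u j = (-1)%Z -> (distinf j q <= 1)%Z -> (1 <= neg_count u q 1)%nat.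
Proof.
  intros h1 h2. assert (hj : In j (neg_cube u q 1)) by (apply in_neg_cube; auto).
  unfold neg_count. destruct (neg_cube u q 1); [contradiction | simpl; lia].
Qed.

Theorem mainTheorem12 :
  forall (d : nat) (s lam Lam : R),
    (2 <= d)%nat -> 0 < s < 1 -> 0 < lam -> lam <= Lam ->
    exists cbar : R, 0 < cbar /\
      forall (J : pt d -> pt d -> R) (q : pt d) (l : nat) (u : pt d -> Z),
        J_nonneg J -> J1 J -> J2 J -> J5 J -> JP J s lam Lam ->
        config u ->
        minimizer J (cube l q) u ->
        in_boundary u q ->
        (forall n, card_is (fun i => u i = (-1)%Z /\ cube l q i) n -> cbar * INR l ^ d <= INR n) /\
        (forall n, card_is (fun i => u i = 1%Z /\ cube l q i) n -> cbar * INR l ^ d <= INR n).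
Proof.
  intros d s lam Lam hd hs hlam hL.
  assert (hd1 : (1 <= d)%nat) by lia.
  destruct (density_const_spec d s lam Lam hd1 hs hlam ltac:(lra)) as [hdl _].
  exists (density_const d s lam Lam / 2 ^ d). split; [apply Rdiv_lt_0_compat; [|apply pow_lt]; lra|].
  intros J q l u hJ0 hJ1 _ _ hJP hu hmin [hq [j [hj1 hj2]]]. split.
  - intros n hn. rewrite (card_neg_cube u q l n hn).
    apply (density_lower_bound J s lam Lam q l u); auto.
    apply (neg_count_1 u q j); auto. rewrite distinf_sym, <- hj1. apply distinf_le_dist1.
  - intros n hn. set (w := fun i => (- u i)%Z).
    assert (hn' : card_is (fun i => w i = (-1)%Z /\ cube l q i) n).
    { destruct hn as [L [h1 [h2 h3]]]. exists L. split; [|split]; auto.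
      intros x. rewrite h2. unfold w. split; intros [a b]; split; auto; lia. }
    rewrite (card_neg_cube w q l n hn').
    apply (density_lower_bound J s lam Lam q l w); auto.
    + intros i. unfold w. destruct (hu i) as [-> | ->]; auto.
    + apply minimizer_opp; auto.
    + apply (neg_count_1 w q q); [unfold w; rewrite hq; reflexivity | rewrite distinf_diag; lia].
Qed.
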